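(* In the setting of the Cauchy problem below, the generating function $\mathcal D(z,w)=\sum_{(x,y)\in\mathbb Z_+^2} r(x,y)z^{-x-1}w^{-y-1}$ of the solution is (the expansion of) a rational function of $(z,w)$ if and only if the generating function of the initial data $$\Phi(z,w)=\sum_{(x,y)\in X}\varphi(x,y)z^{-x-1}w^{-y-1}$$ is (the expansion of) a rational function. Here: $P(z)=\sum_{\alpha=0}^{m} c_{\alpha,1}z^\alpha$, $Q(z)=\sum_{\alpha=0}^{m} c_{\alpha,0}z^\alpha$ are complex polynomials with $c_{m,1}\ne0$, $m\ge1$, $\deg Q<m$; $X=\{(x,y)\in\mathbb Z_+^2: x<m\text{ or }y=0\}$; $\varphi:X\to\mathbb C$ is arbitrary; and $r$ is the solution of $\sum_{\alpha=0}^{m} c_{\alpha,1} r(x+\alpha,y+1)-\sum_{\alpha=0}^{m} c_{\alpha,0} r(x+\alpha,y)=0$ for all $x,y\ge0$ with $r|_X=\varphi$.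
   Context: $\mathbb Z_+$ denotes the nonnegative integers. A formal Laurent series in $z^{-1},w^{-1}$ is called rational if it is the expansion (in the region where $|z|,|w|$ are large) of a rational function. *)

From HB Require Import structures.
From mathcomp Require Import all_boot all_order all_algebra.
Set Implicit Arguments. Unset Strict Implicit. Unset Printing Implicit Defensive.
Import Order.TTheory GRing.Theory Num.Theory.
Local Open Scope ring_scope.

(* A formal series  sum_{x,y>=0} d x y * z^(-x-1) w^(-y-1)  is represented by
   its coefficient function d : nat -> nat -> C.
   A polynomial in C[z,w] is represented as q : {poly {poly C}}, the
   coefficient of z^i w^j being (q`_j)`_i (outer variable w, inner z). *)

Definition ser_coefZ (C : nzRingType) (d : nat -> nat -> C) (s t : int) : C :=
  match s, t with
  | Posz x, Posz y => d x y
  | _, _ => 0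
  end.

(* coefficient of z^a w^b (a b : int) in the formal product q(z,w) * D(z,w) *)
Definition polyser_mul_coef (C : nzRingType) (q : {poly {poly C}})
  (d : nat -> nat -> C) (a b : int) : C :=
  \sum_(j < size q) \sum_(i < size q`_j)
     (q`_j)`_i * ser_coefZ d (i%:Z - a - 1) (j%:Z - b - 1).

Definition poly2_coefZ (C : nzRingType) (p : {poly {poly C}}) (a b : int) : C :=
  if (0 <= a) && (0 <= b) then (p`_(absz b))`_(absz a) else 0.

Definition rational_series (C : nzRingType) (d : nat -> nat -> C) : Prop :=
  exists (p q : {poly {poly C}}), q != 0 /\
    forall a b : int, polyser_mul_coef q d a b = poly2_coefZ p a b.

Definition inX (m x y : nat) : bool := (x < m)%N || (y == 0%N).

Definition init_coef (C : nzRingType) (m : nat) (phi : nat -> nat -> C)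
  (x y : nat) : C := if inX m x y then phi x y else 0.

(* Put u = 1/z and v = 1/w.  Then D(z, w) = u v d(u, v) with d the power series
   sum r(x, y) u^x v^y, and D is rational iff q d = p for polynomials q <> 0 and p
   in C[u, v]: reversing q and p inside a large box of degrees translates between
   the two forms.

   Rational power series are closed under sums, multiplication and division by
   nonzero polynomials, and exchange of u and v.  They are also closed under
   extracting a row x = k: if u^s is the lowest power of u in q, the coefficient
   of u^(s+k) in q d = p expresses q_s(v) d_k(v) through p and the earlier rows.
   The initial data Phi is the sum of the rows x < m and the line y = 0 minus
   their overlap, so it is rational when the solution is.

   Conversely, put L(u, v) = u^m P(1/u) - v u^m Q(1/u).  The recurrence says that
   L d has no coefficient outside X, and since X is a down-set, on X the product
   L d only sees the initial data.  So L d is the restriction to X of L Phi,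
   which is rational when Phi is, and then so is d = (L d) / L. *)

From HB Require Import structures.
From mathcomp Require Import all_boot all_order all_algebra.
From mathcomp Require Import zify.
Set Implicit Arguments. Unset Strict Implicit. Unset Printing Implicit Defensive.
Import Order.TTheory GRing.Theory Num.Theory.
Local Open Scope ring_scope.

Lemma sum_ord_widen0 (R : nmodType) n1 n2 (F : nat -> R) : (n1 <= n2)%N ->
  (forall i, (n1 <= i < n2)%N -> F i = 0) ->
  \sum_(i < n1) F i = \sum_(i < n2) F i.
Proof.
move=> le12 F0; rewrite (big_ord_widen _ F le12) big_mkcond; apply: eq_bigr => i _.
by case: ltnP => // n1i; rewrite F0 // n1i ltn_ord.
Qed.

Lemma sum2_ord_widen0 (R : nmodType) A B N (G : nat -> nat -> R) :
  (A <= N)%N -> (B <= N)%N ->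
  (forall i j, (i < N)%N -> (j < N)%N -> (B <= i)%N || (A <= j)%N -> G i j = 0) ->
  \sum_(j < A) \sum_(i < B) G i j = \sum_(j < N) \sum_(i < N) G i j.
Proof.
move=> le_AN le_BN G0; transitivity (\sum_(j < A) \sum_(i < N) G i j).
  apply: eq_bigr => j _; apply: (@sum_ord_widen0 _ B N (G^~ j)) => // i /andP[le_Bi lt_iN].
  by rewrite G0 ?le_Bi // (leq_trans (ltn_ord j) le_AN).
apply: (@sum_ord_widen0 _ A N (fun j => \sum_(i < N) G i j)) => // j /andP[le_Aj lt_jN].
by apply: big1 => i _; rewrite G0 ?le_Aj ?orbT.
Qed.

Section RationalPowerSeries.
Variable C : idomainType.
Implicit Types (p q h : {poly {poly C}}) (d : nat -> nat -> C).

(* q is read as the polynomial q(u, v) with coefficient coef2 q i j at u^i v^j, and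
   d as the power series sum d x y u^x v^y. *)
Definition coef2 q i j : C := (q`_j)`_i.

Lemma coef2_inj p q : coef2 p =2 coef2 q -> p = q.
Proof. by move=> E; apply/polyP => j; apply/polyP => i; apply: E. Qed.

Lemma coef2_neq0 q : q != 0 -> exists i j, coef2 q i j != 0.
Proof.
move=> nq; exists (size (lead_coef q)).-1, (size q).-1.
by rewrite /coef2 -/(lead_coef q) -/(lead_coef _) !lead_coef_eq0.
Qed.

Lemma coef2_eq0 q i j : q = 0 -> coef2 q i j = 0.
Proof. by move->; rewrite /coef2 !coef0. Qed.

Definition psmul q d x y : C :=
  \sum_(j < y.+1) \sum_(i < x.+1) coef2 q i j * d (x - i)%N (y - j)%N.

Lemma psmul_coef2 q p : psmul q (coef2 p) =2 coef2 (q * p).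
Proof.
move=> x y; rewrite /psmul /coef2 coefM coef_sum; apply: eq_bigr => j _.
by rewrite coefM.
Qed.

Lemma eq_psmul_le q d d' x y :
  (forall a b, (a <= x)%N -> (b <= y)%N -> d a b = d' a b) ->
  psmul q d x y = psmul q d' x y.
Proof.
by move=> E; apply: eq_bigr => j _; apply: eq_bigr => i _; rewrite E ?leq_subr.
Qed.

Lemma eq_psmul q d d' : d =2 d' -> psmul q d =2 psmul q d'.
Proof. by move=> E x y; apply: eq_psmul_le => a b _ _; apply: E. Qed.

Definition poly2 (f : nat -> nat -> C) N M : {poly {poly C}} :=
  \poly_(j < M) \poly_(i < N) f i j.

Lemma coef2_poly2 f N M i j :
  coef2 (poly2 f N M) i j = if (i < N)%N && (j < M)%N then f i j else 0.
Proof.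
rewrite /coef2 coef_poly; case: (j < M)%N; last by rewrite coef0 andbF.
by rewrite coef_poly andbT.
Qed.

Lemma psmulA q1 q2 d : psmul (q1 * q2) d =2 psmul q1 (psmul q2 d).
Proof.
(* Only the coefficients of [d] in the window [0..x] x [0..y] matter, and
   there [d] is the coefficient function of a polynomial. *)
move=> x y; set t := poly2 d x.+1 y.+1.
have dt a b : (a <= x)%N -> (b <= y)%N -> d a b = coef2 t a b.
  by move=> ax bx; rewrite coef2_poly2 !ltnS ax bx.
rewrite (eq_psmul_le _ dt) psmul_coef2 -mulrA -psmul_coef2.
rewrite -(eq_psmul _ (psmul_coef2 q2 t)).
apply: eq_psmul_le => a b ax bx; apply: eq_psmul_le => a' b' aa' bb'.
by rewrite dt //; [apply: leq_trans ax | apply: leq_trans bx].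
Qed.

Definition rational_ps d :=
  exists q p, q != 0 /\ forall x y, psmul q d x y = coef2 p x y.

Lemma rational_ps_ext d d' : d =2 d' -> rational_ps d -> rational_ps d'.
Proof.
move=> E [q [p [nq qdp]]]; exists q, p; split=> // x y.
by rewrite -qdp; apply: eq_psmul => a b; rewrite E.
Qed.

Lemma rational_ps_coef2 p : rational_ps (coef2 p).
Proof. by exists 1, p; split=> [|x y]; rewrite ?oner_eq0 // psmul_coef2 mul1r. Qed.

Lemma rational_ps0 : rational_ps (fun _ _ => 0).
Proof. by apply: rational_ps_ext (rational_ps_coef2 0) => a b; rewrite coef2_eq0. Qed.

Lemma rational_ps_psmul h d : rational_ps d -> rational_ps (psmul h d).
Proof.
move=> [q [p [nq qdp]]]; exists q, (h * p); split=> // x y.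
rewrite -psmulA mulrC psmulA -psmul_coef2; exact: eq_psmul.
Qed.

Lemma rational_ps_divp h d : h != 0 -> rational_ps (psmul h d) -> rational_ps d.
Proof.
move=> nh [q [p [nq qhdp]]]; exists (q * h), p.
by split=> [|x y]; rewrite ?mulf_neq0 ?psmulA.
Qed.

Lemma rational_psD d1 d2 :
  rational_ps d1 -> rational_ps d2 -> rational_ps (fun a b => d1 a b + d2 a b).
Proof.
move=> [q1 [p1 [nq1 E1]]] [q2 [p2 [nq2 E2]]].
exists (q1 * q2), (q2 * p1 + q1 * p2); split=> [|x y]; first by rewrite mulf_neq0.
transitivity (psmul (q2 * q1) d1 x y + psmul (q1 * q2) d2 x y).
  rewrite mulrC /psmul -big_split; apply: eq_bigr => j _.
  by rewrite -big_split; apply: eq_bigr => i _; rewrite mulrDr.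
rewrite !psmulA /coef2 coefD coefD -/(coef2 _ x y) -/(coef2 _ x y).
by rewrite -!psmul_coef2; congr (_ + _); apply: eq_psmul.
Qed.

Lemma rational_psN d : rational_ps d -> rational_ps (fun a b => - d a b).
Proof.
move=> [q [p [nq qdp]]]; exists q, (- p); split=> // x y.
rewrite /coef2 !coefN -/(coef2 _ x y) -qdp /psmul -sumrN.
by apply: eq_bigr => j _; rewrite -sumrN; apply: eq_bigr => i _; rewrite mulrN.
Qed.

Lemma rational_ps_sum n (F : nat -> nat -> nat -> C) :
  (forall k, (k < n)%N -> rational_ps (F k)) ->
  rational_ps (fun a b => \sum_(k < n) F k a b).
Proof.
elim: n => [|n IH] ratF.
  by apply: rational_ps_ext rational_ps0 => a b; rewrite big_ord0.
have ratF' k : (k < n)%N -> rational_ps (F k) by move/ltnW/ratF.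
apply: rational_ps_ext (rational_psD (IH ratF') (ratF n (ltnSn n))) => a b.
by rewrite big_ord_recr.
Qed.

Definition bounded2 K q := forall i j, (K <= i)%N || (K <= j)%N -> coef2 q i j = 0.

Lemma bounded2W K K' q : (K <= K')%N -> bounded2 K q -> bounded2 K' q.
Proof.
move=> KK' bq i j /orP ij; apply: bq; apply/orP.
by case: ij => [/(leq_trans KK')|/(leq_trans KK')]; [left|right].
Qed.

Lemma bounded2_poly2 f K : bounded2 K (poly2 f K K).
Proof.
by move=> i j ij; rewrite coef2_poly2 !ltnNge; case/orP: ij => ->; rewrite ?andbF.
Qed.

Lemma bounded2_exists q : exists K, bounded2 K q.
Proof.
exists (\max_(j < size q) size (q`_j)%R + size q)%N => i j /orP[le_i | le_j].
  have [lt_j | le_j] := ltnP j (size q); last by rewrite /coef2 [q`_j]nth_default ?coef0.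
  apply: nth_default; apply: leq_trans (leq_trans (leq_addr _ _) le_i).
  exact: (@leq_bigmax _ (fun j : 'I_(size q) => size q`_j) (Ordinal lt_j)).
by rewrite /coef2 [q`_j]nth_default ?coef0 //; apply: leq_trans (leq_addl _ _) le_j.
Qed.

Lemma bounded2_exists2 p q : exists K, bounded2 K p /\ bounded2 K q.
Proof.
have [[Kp bp] [Kq bq]] := (bounded2_exists p, bounded2_exists q).
by exists (maxn Kp Kq); split; apply: bounded2W (bp) || apply: bounded2W (bq);
  rewrite ?leq_maxl ?leq_maxr.
Qed.

Lemma rational_ps_swap d : rational_ps d -> rational_ps (fun a b => d b a).
Proof.
move=> [q [p [nq qdp]]]; have [K [bq bp]] := bounded2_exists2 q p.
pose swap2 (s : {poly {poly C}}) := poly2 (fun i j => coef2 s j i) K K.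
have coef2_swap2 s : bounded2 K s -> forall i j, coef2 (swap2 s) i j = coef2 s j i.
  move=> bs i j; rewrite coef2_poly2; case: ifP => // /negbT.
  by rewrite negb_and -!leqNgt orbC => /bs ->.
exists (swap2 q), (swap2 p); split=> [|x y].
  have [i [j qij]] := coef2_neq0 nq; apply: contra_neq qij => q0.
  by rewrite -coef2_swap2 // q0 coef2_eq0.
rewrite coef2_swap2 // -qdp /psmul exchange_big; apply: eq_bigr => i _.
by apply: eq_bigr => j _; rewrite coef2_swap2.
Qed.

Definition vseries (g : nat -> C) a b : C := if a == 0%N then g b else 0.

Definition ucoef q i : {poly {poly C}} := map_poly (fun c : {poly C} => (c`_i)%:P) q.

Lemma coef2_ucoef q i : coef2 (ucoef q i) =2 vseries (coef2 q i).
Proof. by move=> a b; rewrite /coef2 coef_map_id0 ?coef0 // coefC. Qed.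

Lemma ucoef_eq0 q i j : ucoef q i = 0 -> coef2 q i j = 0.
Proof.
by move=> q0; rewrite -[coef2 q i j]/(vseries (coef2 q i) 0 j) -coef2_ucoef q0 coef2_eq0.
Qed.

Definition cauchy_coef (g h : nat -> C) y : C := \sum_(j < y.+1) g j * h (y - j)%N.

Lemma psmul_ucoef q i g : psmul (ucoef q i) (vseries g) =2 vseries (cauchy_coef (coef2 q i) g).
Proof.
move=> [|a] b; rewrite /psmul /vseries /=.
  by apply: eq_bigr => j _; rewrite big_ord1 coef2_ucoef.
apply: big1 => j _; apply: big1 => -[[|i'] lt_i'] _ /=; first by rewrite mulr0.
by rewrite coef2_ucoef mul0r.
Qed.

Lemma psmul_rows q d x y :
  psmul q d x y = \sum_(i < x.+1) cauchy_coef (coef2 q i) (d (x - i)%N) y.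
Proof. by rewrite /psmul exchange_big. Qed.

Lemma rational_ps_row d k : rational_ps d -> rational_ps (vseries (d k)).
Proof.
move=> [q [p [nq qdp]]].
have ex_s : exists s, ucoef q s != 0.
  have [i [j qij]] := coef2_neq0 nq; exists i; apply: contra_neq qij; exact: ucoef_eq0.
have [s nqs min_s] := ex_minnP ex_s.
have q_below_s i j : (i < s)%N -> coef2 q i j = 0.
  move=> lt_is; apply/eqP; apply: contraTT lt_is => qij; rewrite -leqNgt.
  by apply: min_s; apply: contra_neq qij; exact: ucoef_eq0.
(* Coefficient of u^(s+n) in q d = p, using that q has no u-degree below s. *)
have coef_p_row n y : coef2 p (s + n) y =
    \sum_(t < n.+1) cauchy_coef (coef2 q (s + n - t)) (d t) y.
  rewrite -qdp psmul_rows (reindex_inj rev_ord_inj) /=.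
  rewrite (@sum_ord_widen0 _ n.+1 (s + n).+1
    (fun t => cauchy_coef (coef2 q (s + n - t)) (d t) y)) ?ltnS ?leq_addl //; last first.
    move=> t /andP[lt_nt lt_t]; apply: big1 => j _.
    by rewrite q_below_s ?mul0r //; lia.
  by apply: eq_bigr => t _; rewrite subSS subKn // -ltnS.
elim/ltn_ind: k => k IH; apply: (rational_ps_divp nqs).
have rat_rest : rational_ps (fun a b =>
    \sum_(t < k) psmul (ucoef q (s + k - t)) (vseries (d t)) a b).
  apply: (@rational_ps_sum k (fun t => psmul (ucoef q (s + k - t)) (vseries (d t)))).
  by move=> t lt_tk; apply: rational_ps_psmul; apply: IH.
apply: rational_ps_ext (rational_psD (rational_ps_coef2 (ucoef p (s + k)))
  (rational_psN rat_rest)) => a b.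
rewrite coef2_ucoef psmul_ucoef; under eq_bigr do rewrite psmul_ucoef.
rewrite /vseries; case: eqP => _; last by rewrite big1 ?subr0.
by rewrite coef_p_row big_ord_recr /= addnK addrAC subrr add0r.
Qed.

Lemma psmul_Xn k d a b :
  psmul ('X^k)%:P d a b = if (k <= a)%N then d (a - k)%N b else 0.
Proof.
rewrite /psmul big_ord_recl [X in _ + X]big1 ?addr0 => [|j _]; last first.
  by apply: big1 => i _; rewrite /coef2 coefC /= coef0 mul0r.
rewrite subn0 -ltnS -(@big_ord1_eq C 0 +%R (fun i => d (a - i)%N b)) [RHS]big_mkcond.
apply: eq_bigr => i _.
by rewrite /coef2 coefC /= coefXn; case: eqP => [->|_]; rewrite ?mul1r ?mul0r.
Qed.

Lemma rational_ps_col d :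
  rational_ps d -> rational_ps (fun a b => if b == 0%N then d a 0%N else 0).
Proof.
move=> rat_d.
by apply: rational_ps_ext (rational_ps_swap (rational_ps_row 0 (rational_ps_swap rat_d))).
Qed.

Lemma rational_ps_init_coef m d : rational_ps d -> rational_ps (init_coef m d).
Proof.
move=> rat_d.
have rows : rational_ps (fun a b => \sum_(k < m) (if a == k then d k b else 0)).
  apply: (@rational_ps_sum m (fun k a b => if a == k then d k b else 0)) => k _.
  apply: rational_ps_ext (rational_ps_psmul ('X^k)%:P (rational_ps_row k rat_d)).
  move=> a b; rewrite psmul_Xn /vseries subn_eq0 eqn_leq.
  by case: (leqP k a) => [le_ka | lt_ak]; rewrite ?le_ka ?andbT ?andbF.
(* the rows x < m, plus the line y = 0, minus the m points they share *)
have corner := rational_ps_coef2 (poly2 (fun a _ => d a 0%N) m 1).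
apply: rational_ps_ext (rational_psD rows (rational_psD (rational_ps_col rat_d)
  (rational_psN corner))) => a b.
have -> : \sum_(k < m) (if a == k then d k b else 0) = if (a < m)%N then d a b else 0.
  rewrite -(@big_ord1_eq C 0 +%R (fun k => d k b)) [RHS]big_mkcond; apply: eq_bigr => k _.
  by rewrite eq_sym; case: eqP => [->|].
rewrite /init_coef /inX coef2_poly2 ltnS leqn0.
by case: (ltnP a m) => _; case: eqP => [->|_] /=; rewrite ?subrr ?addr0 ?add0r ?subr0.
Qed.

End RationalPowerSeries.

Section LaurentSeries.
Variable C : idomainType.
Implicit Types (p q : {poly {poly C}}) (d : nat -> nat -> C).

Lemma ser_coefZ_neg d s t : (s < 0) || (t < 0) -> ser_coefZ d s t = 0.
Proof. by case: s t => [s|s] [t|t]. Qed.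

Lemma poly2_coefZE p a b :
  poly2_coefZ p a b = if (0 <= a) && (0 <= b) then coef2 p `|a| `|b| else 0.
Proof. by []. Qed.

Lemma poly2_coefZ_neg p a b : (a < 0) || (b < 0) -> poly2_coefZ p a b = 0.
Proof. by rewrite poly2_coefZE; case: ifP => // /andP[]; lia. Qed.

Definition psmulZ K q d (X Y : int) : C :=
  \sum_(j < K) \sum_(i < K) coef2 q i j * ser_coefZ d (X - i%:Z) (Y - j%:Z).

Lemma psmulZ_neg K q d X Y : (X < 0) || (Y < 0) -> psmulZ K q d X Y = 0.
Proof.
move=> XY; apply: big1 => j _; apply: big1 => i _.
by rewrite ser_coefZ_neg ?mulr0 //; lia.
Qed.

Lemma psmulZ_nat K q d (x y : nat) : bounded2 K q -> psmulZ K q d x y = psmul q d x y.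
Proof.
move=> bq; pose G i j := coef2 q i j * ser_coefZ d (x%:Z - i%:Z) (y%:Z - j%:Z).
have -> : psmul q d x y = \sum_(j < y.+1) \sum_(i < x.+1) G i j.
  by apply: eq_bigr => j _; apply: eq_bigr => i _; rewrite /G !subzn // -ltnS.
rewrite /psmulZ -/G (@sum2_ord_widen0 _ K K (K + x + y).+1 G); try lia.
  rewrite (@sum2_ord_widen0 _ y.+1 x.+1 (K + x + y).+1 G) //; try lia.
  by move=> i j _ _ out; rewrite /G ser_coefZ_neg ?mulr0 //; lia.
by move=> i j _ _ out; rewrite /G bq ?mul0r.
Qed.

Lemma polyser_mul_coefE K q d a b : bounded2 K q ->
  polyser_mul_coef q d a b =
  \sum_(j < K) \sum_(i < K) coef2 q i j * ser_coefZ d (i%:Z - a - 1) (j%:Z - b - 1).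
Proof.
move=> bq; pose G i j := coef2 q i j * ser_coefZ d (i%:Z - a - 1) (j%:Z - b - 1).
have size_q : (size q <= K)%N.
  apply/leq_sizeP => j le_Kj; apply/polyP => i; rewrite coef0; apply: bq.
  by rewrite le_Kj orbT.
have size_qj j : (size (q`_j)%R <= K)%N by apply/leq_sizeP => i le_Ki; apply: bq; rewrite le_Ki.
transitivity (\sum_(j < size q) \sum_(i < K) G i j).
  apply: eq_bigr => j _; apply: (@sum_ord_widen0 _ _ _ (G^~ j)) => // i /andP[le_i _].
  by rewrite /G /coef2 nth_default ?mul0r.
apply: (@sum_ord_widen0 _ _ _ (fun j => \sum_(i < K) G i j)) => // j /andP[le_j _].
by apply: big1 => i _; rewrite /G /coef2 [q`_j]nth_default ?coef0 ?mul0r.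
Qed.

(* u^(K-1) v^(K-1) q(1/u, 1/v) *)
Definition rev2 K q := poly2 (fun i j => coef2 q (K - i.+1) (K - j.+1)) K K.

Lemma coef2_rev2 K q i j : (i < K)%N -> (j < K)%N ->
  coef2 (rev2 K q) i j = coef2 q (K - i.+1) (K - j.+1).
Proof. by move=> lt_iK lt_jK; rewrite coef2_poly2 lt_iK lt_jK. Qed.

Lemma rev2K K q : bounded2 K q -> rev2 K (rev2 K q) = q.
Proof.
move=> bq; apply: coef2_inj => i j; have [/andP[lt_iK lt_jK] | out] := boolP ((i < K) && (j < K))%N.
  rewrite !coef2_rev2; try lia; congr coef2; lia.
by rewrite coef2_poly2 (negbTE out) bq //; move: out; rewrite negb_and -!leqNgt.
Qed.

Lemma rev2_neq0 K q : bounded2 K q -> q != 0 -> rev2 K q != 0.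
Proof.
move=> bq; apply: contra_neq => q0; rewrite -(rev2K bq) q0.
by apply: coef2_inj => i j; rewrite coef2_poly2 !coef2_eq0 ?if_same.
Qed.

(* (rev2 K q)(z, w) D(z, w) = (u v)^(2-K) q(u, v) d(u, v) *)
Lemma polyser_mul_coef_rev2 K q d a b : bounded2 K q ->
  polyser_mul_coef (rev2 K q) d a b = psmulZ K q d (K%:Z - 2 - a) (K%:Z - 2 - b).
Proof.
move=> bq; rewrite (polyser_mul_coefE _ _ _ (bounded2_poly2 (K := K) _)) /psmulZ.
rewrite (reindex_inj rev_ord_inj); apply: eq_bigr => j _.
rewrite (reindex_inj rev_ord_inj); apply: eq_bigr => i _ /=.
have [lt_iK lt_jK] := (ltn_ord i, ltn_ord j).
rewrite coef2_rev2 ?rev_ord_proof //.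
by congr (coef2 q _ _ * ser_coefZ d _ _); lia.
Qed.

Lemma rational_series_ps d : rational_series d -> rational_ps d.
Proof.
move=> [p [q [nq qdp]]]; have [K bq] := bounded2_exists q.
exists (rev2 K q), (poly2 (fun x y => poly2_coefZ p (K%:Z - 2 - x%:Z) (K%:Z - 2 - y%:Z)) K K).
split=> [|x y]; first exact: rev2_neq0.
rewrite -(@psmulZ_nat K) ?coef2_poly2; last exact: bounded2_poly2.
have -> : psmulZ K (rev2 K q) d x y =
    polyser_mul_coef q d (K%:Z - 2 - x%:Z) (K%:Z - 2 - y%:Z).
  rewrite -{2}(rev2K bq) polyser_mul_coef_rev2; last exact: bounded2_poly2.
  by congr psmulZ; lia.
rewrite qdp; case: ifP => // /negbT; rewrite negb_and -!leqNgt => out.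
by rewrite poly2_coefZ_neg //; lia.
Qed.

Lemma rational_ps_series d : rational_ps d -> rational_series d.
Proof.
move=> [q [p [nq qdp]]]; have [K [bq bp]] := bounded2_exists2 q p.
have bqS := bounded2W (leqnSn K) bq.
exists (rev2 K p), (rev2 K.+1 q); split=> [|a b]; first exact: rev2_neq0.
rewrite polyser_mul_coef_rev2 //.
have [neg | ] := boolP ((K.+1%:Z - 2 - a < 0) || (K.+1%:Z - 2 - b < 0)).
  rewrite psmulZ_neg // poly2_coefZE; case: ifP => // /andP[a0 b0].
  by rewrite coef2_poly2 ifF //; lia.
rewrite negb_or -!leNgt => /andP[X0 Y0].
have [x eX] : exists x : nat, K.+1%:Z - 2 - a = x by exists (absz (K.+1%:Z - 2 - a)%R); lia.
have [y eY] : exists y : nat, K.+1%:Z - 2 - b = y by exists (absz (K.+1%:Z - 2 - b)%R); lia.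
rewrite eX eY psmulZ_nat // qdp poly2_coefZE; case: ifP => [/andP[a0 b0] | ].
  by rewrite coef2_rev2; [congr coef2 | |]; lia.
by move=> ab; rewrite bp //; lia.
Qed.

Lemma rational_seriesE d : rational_series d <-> rational_ps d.
Proof. by split; [apply: rational_series_ps | apply: rational_ps_series]. Qed.

End LaurentSeries.

Section Recurrence.
Variables (C : idomainType) (m : nat).
Implicit Types (P Q : {poly C}) (d : nat -> nat -> C).

Lemma inX_le a b a' b' : inX m a b -> (a' <= a)%N -> (b' <= b)%N -> inX m a' b'.
Proof. by rewrite /inX => /orP[lt_am | /eqP b0] le_a le_b; apply/orP; [left | right]; lia. Qed.

Lemma psmul_init_coef q d a b :
  inX m a b -> psmul q (init_coef m d) a b = psmul q d a b.
Proof.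
move=> Xab; apply: eq_psmul_le => a' b' le_a le_b.
by rewrite /init_coef (inX_le Xab le_a le_b).
Qed.

Definition reciprocal P : {poly C} := \poly_(i < m.+1) P`_(m - i).

Lemma sum_reciprocal P a (G : nat -> C) : (m <= a)%N ->
  \sum_(i < a.+1) (reciprocal P)`_i * G (a - i)%N = \sum_(k < m.+1) P`_k * G (a - m + k)%N.
Proof.
move=> le_ma; transitivity (\sum_(i < m.+1) (reciprocal P)`_i * G (a - i)%N).
  symmetry; apply: (@sum_ord_widen0 _ _ _ (fun i => (reciprocal P)`_i * G (a - i)%N)) => //.
  by move=> i /andP[lt_mi _]; rewrite coef_poly ltnNge lt_mi mul0r.
rewrite (reindex_inj rev_ord_inj); apply: eq_bigr => k _ /=.
have lt_km := ltn_ord k; rewrite coef_poly subSS ifT; last by lia.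
by congr (P`_ _ * G _); lia.
Qed.

Definition recurrence_poly P Q : {poly {poly C}} := (reciprocal P)%:P - 'X * (reciprocal Q)%:P.

Lemma coef2_recurrence_poly P Q i j : coef2 (recurrence_poly P Q) i j =
  (if j == 0%N then (reciprocal P)`_i else 0) - (if j == 1%N then (reciprocal Q)`_i else 0).
Proof.
rewrite /coef2 coefB coefXM !coefC.
by case: j => [|[|j]] /=; rewrite ?coefB ?coef0 ?subr0 ?sub0r.
Qed.

Lemma recurrence_poly_neq0 P Q : size P = m.+1 -> recurrence_poly P Q != 0.
Proof.
move=> sizeP; apply/eqP => /(congr1 (fun s => coef2 s 0%N 0%N)).
rewrite coef2_recurrence_poly coef2_eq0 // subr0 coef_poly subn0 /=.
by apply/eqP; rewrite -[m]/(m.+1.-1) -sizeP -/(lead_coef P) lead_coef_eq0 -size_poly_eq0 sizeP.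
Qed.

Lemma psmul_recurrence_poly P Q d a b : (m <= a)%N ->
  psmul (recurrence_poly P Q) d a b.+1 =
  \sum_(k < m.+1) P`_k * d (a - m + k)%N b.+1 - \sum_(k < m.+1) Q`_k * d (a - m + k)%N b.
Proof.
move=> le_ma; rewrite /psmul (big_ord_recl b.+1) (big_ord_recl b).
rewrite [X in _ + (_ + X)]big1 ?addr0; last first.
  by move=> j _; apply: big1 => i _; rewrite coef2_recurrence_poly subrr mul0r.
rewrite -(@sum_reciprocal P a (fun x => d x b.+1)) // -(@sum_reciprocal Q a (fun x => d x b)) //.
rewrite -sumrN; congr (_ + _); apply: eq_bigr => i _;
  by rewrite coef2_recurrence_poly /= ?subr0 ?sub0r ?mulNr /bump /= ?subn0 ?subSS ?subn0.
Qed.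

Lemma recurrence_poly_init_coef P Q r :
  (forall x y, \sum_(k < m.+1) P`_k * r (x + k)%N y.+1
               - \sum_(k < m.+1) Q`_k * r (x + k)%N y = 0) ->
  init_coef m (psmul (recurrence_poly P Q) (init_coef m r)) =2 psmul (recurrence_poly P Q) r.
Proof.
move=> rec a b; rewrite /init_coef; case: ifP => [Xab | ]; first exact: psmul_init_coef.
move/negbT; rewrite /inX negb_or -leqNgt => /andP[le_ma]; case: b => [|b] // _.
by rewrite psmul_recurrence_poly // rec.
Qed.

End Recurrence.

Theorem mainTheorem3 (C : numClosedFieldType) (m : nat) (P Q : {poly C})
  (phi r : nat -> nat -> C) :
  (1 <= m)%N ->
  size P = m.+1 ->
  (size Q <= m)%N ->
  (forall x y : nat,
     \sum_(alpha < m.+1) P`_alpha * r (x + alpha)%N y.+1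
     - \sum_(alpha < m.+1) Q`_alpha * r (x + alpha)%N y = 0) ->
  (forall x y : nat, inX m x y -> r x y = phi x y) ->
  (rational_series r <-> rational_series (init_coef m phi)).
Proof.
move=> _ sizeP _ rec r_phi.
have r_init : init_coef m r =2 init_coef m phi.
  by move=> x y; rewrite /init_coef; case: ifP => // /r_phi ->.
rewrite !rational_seriesE; split=> [rat_r | rat_phi].
  exact: rational_ps_ext r_init (rational_ps_init_coef m rat_r).
have rat_init_r := rational_ps_ext (fun x y => esym (r_init x y)) rat_phi.
apply: (rational_ps_divp (recurrence_poly_neq0 Q sizeP)).
apply: rational_ps_ext (recurrence_poly_init_coef rec) _.
exact/rational_ps_init_coef/rational_ps_psmul.
Qed.
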